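(* For $p\le \log r$, every deterministic online algorithm for the Online Mixed Packing and Covering problem with objective the $\ell_p$ norm of the violation vector $\vec\lambda=(\lambda_1,\dots,\lambda_r)$ has competitive ratio $\Omega(p\log(d/\log r))$. This holds even when all entries of the covering and packing matrices are in $\{0,1\}$.
   Context: Online Mixed Packing and Covering: there are $m$ non-negative variables $\vec x$, initially $0$, which may only increase over time. A set of $r$ packing constraints $P\vec x\le \vec p$ (with $P\in\mathbb{R}_{\ge0}^{r\times m}$, $\vec p>0$) is known offline; covering constraints $\sum_i C_{ji}x_i\ge c_j$ with non-negative entries arrive online one at a time and must be satisfied upon arrival by increasing variables. For each packing constraint $k$, the violation is $\lambda_k=\frac{\sum_i P_{ki}x_i}{p_k}$, and the objective is $\big(\sum_{k=1}^r\lambda_k^p\big)^{1/p}$, compared with the optimum offline value. $d$ is the maximum number of variables appearing in any packing or covering constraint. *)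

From Stdlib Require Import Reals List.
Import ListNotations.
Open Scope R_scope.

Fixpoint rsum (n : nat) (f : nat -> R) : R :=
  match n with
  | O => 0
  | S k => rsum k f + f k
  end.

Fixpoint supp_size (n : nat) (f : nat -> R) : nat :=
  match n with
  | O => O
  | S k => (supp_size k f + (if Req_EM_T (f k) 0 then 0 else 1))%nat
  end.

Definition rpow (x y : R) : R := if Rle_dec x 0 then 0 else Rpower x y.

(* A covering constraint  sum_i C i * x i >= b  is given by the pair (C, b). *)
Definition cover := ((nat -> R) * R)%type.

Definition covers (m : nat) (c : cover) (x : nat -> R) : Prop :=
  rsum m (fun i => fst c i * x i) >= snd c.

Definition viol (m : nat) (P : nat -> nat -> R) (pv : nat -> R)
  (x : nat -> R) (k : nat) : R :=
  rsum m (fun i => P k i * x i) / pv k.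

Definition lp_obj (p : R) (m r : nat) (P : nat -> nat -> R) (pv : nat -> R)
  (x : nat -> R) : R :=
  rpow (rsum r (fun k => rpow (viol m P pv x k) p)) (/ p).

(* A deterministic online algorithm: given the offline data (m, r, P, pv)
   and the sequence of covering constraints revealed so far, it outputs
   the current value of the variables x_0 .. x_{m-1}. *)
Definition online_alg :=
  nat -> nat -> (nat -> nat -> R) -> (nat -> R) -> list cover -> nat -> R.

(* A covering constraint with non-negative coefficients that can be satisfied
   (some positive coefficient, or a non-positive right-hand side). *)
Definition admissible_cover (m : nat) (c : cover) : Prop :=
  (forall i, (i < m)%nat -> 0 <= fst c i) /\
  ((exists i, (i < m)%nat /\ 0 < fst c i) \/ snd c <= 0).

Definition valid_alg (A : online_alg) : Prop :=
  forall (m r : nat) (P : nat -> nat -> R) (pv : nat -> R) (hist : list cover),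
    (forall i, (i < m)%nat -> 0 <= A m r P pv hist i) /\
    (forall c : cover, admissible_cover m c ->
       (forall i, (i < m)%nat -> A m r P pv hist i <= A m r P pv (hist ++ [c]) i) /\
       covers m c (A m r P pv (hist ++ [c]))).

Definition is01 (a : R) : Prop := a = 0 \/ a = 1.

(* The packing constraints are 2^q rows, each the indicator of a block of
   q levels of 2^L variables.  The adversary runs a knockout tournament on the
   rows.  When two rows meet at level t, it plays a halving game on their t-th
   levels: it asks to cover the union of two intervals, one in each row, then
   keeps the lighter half of each interval and repeats.  Each of the L rounds
   strands half a unit of the algorithm's mass, while one variable of the
   losing row lies in every request, so offline the loser gets load 1 and the
   winner keeps load 0.  The heavier of the two rows advances, which gives the
   final winner algorithmic load q L / 4, whereas the offline solution has
   load 1 on at most 2^q rows and thus l_p cost at most 2^(q/p) <= 2.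
   Taking q ~ p and 2^L ~ d / ln r gives the bound. *)

From Stdlib Require Import Reals Lra Lia List ZArith.
Import ListNotations.
Open Scope R_scope.

(** * Finite sums and interval indicators *)

Lemma rsum_ext n f g : (forall i, (i < n)%nat -> f i = g i) -> rsum n f = rsum n g.
Proof.
  induction n as [|n IH]; intros H; simpl; [reflexivity|].
  rewrite IH by (intros; apply H; lia); rewrite H by lia; reflexivity.
Qed.

Lemma rsum_le n f g : (forall i, (i < n)%nat -> f i <= g i) -> rsum n f <= rsum n g.
Proof.
  induction n as [|n IH]; intros H; simpl; [lra|].
  pose proof (IH (fun i Hi => H i ltac:(lia))); pose proof (H n ltac:(lia)); lra.
Qed.

Lemma rsum_nonneg n f : (forall i, (i < n)%nat -> 0 <= f i) -> 0 <= rsum n f.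
Proof.
  induction n as [|n IH]; intros H; simpl; [lra|].
  pose proof (IH (fun i Hi => H i ltac:(lia))); pose proof (H n ltac:(lia)); lra.
Qed.

Lemma rsum_eq0 n f : (forall i, (i < n)%nat -> f i = 0) -> rsum n f = 0.
Proof.
  induction n as [|n IH]; intros H; simpl; [reflexivity|].
  rewrite IH by (intros; apply H; lia); rewrite H by lia; lra.
Qed.

Lemma rsum_add n f g : rsum n (fun i => f i + g i) = rsum n f + rsum n g.
Proof. induction n as [|n IH]; simpl; [lra|]. rewrite IH; lra. Qed.

Lemma rsum_split a b f :
  rsum (a + b) f = rsum a f + rsum b (fun j => f (a + j)%nat).
Proof.
  induction b as [|b IH]; simpl; [rewrite Nat.add_0_r; lra|].
  rewrite Nat.add_succ_r; simpl; rewrite IH; lra.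
Qed.

Lemma rsum_ge_term n f i :
  (forall j, (j < n)%nat -> 0 <= f j) -> (i < n)%nat -> f i <= rsum n f.
Proof.
  induction n as [|n IH]; intros H Hi; simpl; [lia|].
  destruct (Nat.eq_dec i n) as [-> | Hne].
  - pose proof (rsum_nonneg n f (fun j Hj => H j ltac:(lia))); lra.
  - pose proof (IH (fun j Hj => H j ltac:(lia)) ltac:(lia)); pose proof (H n ltac:(lia)); lra.
Qed.

Lemma rsum_lt_indicator n M :
  rsum n (fun k => if (k <? M)%nat then 1 else 0) = INR (Nat.min n M).
Proof.
  induction n as [|n IH]; [reflexivity|].
  simpl rsum; rewrite IH; destruct (Nat.ltb_spec n M).
  - replace (Nat.min (S n) M) with (S (Nat.min n M)) by lia; rewrite S_INR; lra.
  - replace (Nat.min (S n) M) with (Nat.min n M) by lia; lra.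
Qed.

Lemma supp_size_witness n f :
  (1 <= supp_size n f)%nat -> exists i, (i < n)%nat /\ f i <> 0.
Proof.
  induction n as [|n IH]; simpl; intros H; [lia|].
  destruct (Req_EM_T (f n) 0) as [E|E].
  - destruct IH as [i [Hi Hfi]]; [lia|]. exists i; split; [lia|assumption].
  - exists n; split; [lia|assumption].
Qed.

Lemma supp_size_pos n f i : (i < n)%nat -> f i <> 0 -> (1 <= supp_size n f)%nat.
Proof.
  induction n as [|n IH]; simpl; intros Hi Hfi; [lia|].
  destruct (Nat.eq_dec i n) as [-> | Hne].
  - destruct (Req_EM_T (f n) 0); [contradiction|lia].
  - pose proof (IH ltac:(lia) Hfi); lia.
Qed.

Lemma supp_size_add_le n (f g : nat -> R) :
  (supp_size n (fun i => (f i + g i)%R) <= supp_size n f + supp_size n g)%nat.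
Proof.
  induction n as [|n IH]; simpl; [lia|].
  destruct (Req_EM_T (f n + g n) 0), (Req_EM_T (f n) 0), (Req_EM_T (g n) 0);
    try lia; exfalso; lra.
Qed.

Definition indicator (lo w i : nat) : R :=
  if (Nat.leb lo i && Nat.ltb i (lo + w))%bool then 1 else 0.

Definition isum (lo w : nat) (x : nat -> R) : R := rsum w (fun j => x (lo + j)%nat).

Lemma indicator_in lo w i : (lo <= i < lo + w)%nat -> indicator lo w i = 1.
Proof.
  intros H; unfold indicator.
  destruct (Nat.leb_spec lo i), (Nat.ltb_spec i (lo + w)); simpl; lia || lra.
Qed.

Lemma indicator_out lo w i : ~ (lo <= i < lo + w)%nat -> indicator lo w i = 0.
Proof.
  intros H; unfold indicator.
  destruct (Nat.leb_spec lo i), (Nat.ltb_spec i (lo + w)); simpl; lia || lra.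
Qed.

Lemma indicator_01 lo w i : is01 (indicator lo w i).
Proof. unfold is01, indicator; destruct (_ && _)%bool; auto. Qed.

Lemma indicator_split lo a b i : indicator lo a i + indicator (lo + a) b i = indicator lo (a + b) i.
Proof.
  unfold indicator; destruct (Nat.leb_spec lo i), (Nat.ltb_spec i (lo + a)),
    (Nat.leb_spec (lo + a) i), (Nat.ltb_spec i (lo + a + b)), (Nat.ltb_spec i (lo + (a + b)));
    simpl; lra || lia.
Qed.

Lemma supp_size_indicator n lo w : supp_size n (indicator lo w) = (Nat.min n (lo + w) - lo)%nat.
Proof.
  induction n as [|n IH]; [reflexivity|].
  cbn [supp_size]; rewrite IH.
  destruct (Compare_dec.le_lt_dec lo n), (Compare_dec.lt_dec n (lo + w));
    [rewrite indicator_in by lia | rewrite indicator_out by lia ..];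
    destruct (Req_EM_T _ _); lra || lia.
Qed.

Lemma isum_split lo a b x : isum lo (a + b) x = isum lo a x + isum (lo + a) b x.
Proof.
  unfold isum; rewrite rsum_split; f_equal.
  apply rsum_ext; intros; f_equal; lia.
Qed.

Lemma isum_le lo w x y :
  (forall i, (lo <= i < lo + w)%nat -> x i <= y i) -> isum lo w x <= isum lo w y.
Proof. intros H; apply rsum_le; intros; apply H; lia. Qed.

Lemma isum_nonneg lo w x : (forall i, (lo <= i < lo + w)%nat -> 0 <= x i) -> 0 <= isum lo w x.
Proof. intros H; apply rsum_nonneg; intros; apply H; lia. Qed.

Lemma rsum_indicator m lo w x :
  (lo + w <= m)%nat -> rsum m (fun i => indicator lo w i * x i) = isum lo w x.
Proof.
  intros H; replace m with (lo + w + (m - lo - w))%nat by lia.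
  rewrite !rsum_split, (rsum_eq0 lo), (rsum_eq0 (m - lo - w)).
  - unfold isum; rewrite (rsum_ext w _ (fun j => x (lo + j)%nat)); [lra|].
    intros; rewrite indicator_in by lia; lra.
  - intros; rewrite indicator_out by lia; lra.
  - intros; rewrite indicator_out by lia; lra.
Qed.

Lemma lighter_half lo w x :
  exists lo', (lo' = lo \/ lo' = lo + w)%nat /\
    forall y, (forall i, (lo <= i < lo + (w + w))%nat -> x i <= y i) ->
      isum lo' w y + isum lo (w + w) x / 2 <= isum lo (w + w) y.
Proof.
  destruct (Rle_dec (isum lo w x) (isum (lo + w) w x)).
  - exists lo; split; [now left|]; intros y Hy; rewrite !isum_split in *.
    pose proof (isum_le (lo + w) w x y (fun i Hi => Hy i ltac:(lia))); lra.
  - exists (lo + w)%nat; split; [now right|]; intros y Hy; rewrite !isum_split in *.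
    pose proof (isum_le lo w x y (fun i Hi => Hy i ltac:(lia))); lra.
Qed.

Definition unitv (s i : nat) : R := if (i =? s)%nat then 1 else 0.

Lemma unitv_nonneg s i : 0 <= unitv s i.
Proof. unfold unitv; destruct (_ =? _)%nat; lra. Qed.

Lemma rsum_unitv n f s : (s < n)%nat -> rsum n (fun i => f i * unitv s i) = f s.
Proof.
  induction n as [|n IH]; intros Hs; [lia|]; simpl; unfold unitv at 2.
  destruct (Nat.eqb_spec n s) as [-> | Hne].
  - rewrite rsum_eq0; [lra|]. intros i Hi; unfold unitv.
    destruct (Nat.eqb_spec i s); [lia|lra].
  - rewrite IH by lia; lra.
Qed.

Lemma indicator_one lo i : indicator lo 1 i = unitv lo i.
Proof.
  unfold indicator, unitv.
  destruct (Nat.leb_spec lo i), (Nat.ltb_spec i (lo + 1)), (Nat.eqb_spec i lo); simpl; lra || lia.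
Qed.

(** * Real powers and l_p norms *)

Lemma rpow_nonneg x y : 0 <= rpow x y.
Proof. unfold rpow, Rpower; destruct (Rle_dec x 0); [lra | left; apply exp_pos]. Qed.

Lemma rpow_le a b c : 0 <= c -> a <= b -> rpow a c <= rpow b c.
Proof.
  intros Hc Hab; unfold rpow; destruct (Rle_dec a 0), (Rle_dec b 0).
  - lra.
  - left; apply exp_pos.
  - lra.
  - apply Rle_Rpower_l; lra.
Qed.

Lemma rpow_le1 x p : 0 <= p -> x <= 1 -> rpow x p <= 1.
Proof.
  intros Hp Hx; unfold rpow; destruct (Rle_dec x 0); [lra|].
  replace 1 with (Rpower 1 p) by (unfold Rpower; rewrite ln_1, Rmult_0_r; apply exp_0).
  apply Rle_Rpower_l; lra.
Qed.

Lemma rpow_inv v p : 0 < v -> 0 < p -> rpow (rpow v p) (/ p) = v.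
Proof.
  intros Hv Hp; unfold rpow at 2; destruct (Rle_dec v 0); [lra|].
  unfold rpow; destruct (Rle_dec (Rpower v p) 0) as [H|H].
  - unfold Rpower in H; pose proof (exp_pos (p * ln v)); lra.
  - rewrite Rpower_mult, Rinv_r, Rpower_1; lra.
Qed.

Definition lp_norm (p : R) (r : nat) (v : nat -> R) : R :=
  rpow (rsum r (fun k => rpow (v k) p)) (/ p).

Lemma lp_norm_ge_coord p r v l :
  0 < p -> (forall k, 0 <= v k) -> (l < r)%nat -> v l <= lp_norm p r v.
Proof.
  intros Hp Hv Hl; destruct (Rle_lt_or_eq_dec 0 (v l) (Hv l)) as [Hpos| <-];
    [| apply rpow_nonneg].
  rewrite <- (rpow_inv (v l) p) by assumption.
  apply rpow_le; [left; now apply Rinv_0_lt_compat|].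
  apply (rsum_ge_term r (fun k => rpow (v k) p)); [intros; apply rpow_nonneg | assumption].
Qed.

Lemma lp_norm_le_card p r v (M : nat) :
  0 < p -> (forall k, 0 <= v k <= 1) -> (forall k, (M <= k)%nat -> v k = 0) ->
  lp_norm p r v <= rpow (INR M) (/ p).
Proof.
  intros Hp Hv HM; apply rpow_le; [left; now apply Rinv_0_lt_compat|].
  apply Rle_trans with (INR (Nat.min r M)); [| apply le_INR; lia].
  rewrite <- rsum_lt_indicator; apply rsum_le; intros k _.
  destruct (Nat.ltb_spec k M).
  - apply rpow_le1; [lra | apply Hv].
  - rewrite HM by assumption; unfold rpow; destruct (Rle_dec 0 0); lra.
Qed.

Lemma rpow_pow2_inv_le (q : nat) p : 0 < p -> INR q <= p -> rpow (2 ^ q) (/ p) <= 2.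
Proof.
  intros Hp Hq; unfold rpow; destruct (Rle_dec (2 ^ q) 0) as [H|_]; [lra|].
  rewrite <- Rpower_pow, Rpower_mult by lra.
  rewrite <- (Rpower_1 2) at 2 by lra; apply Rle_Rpower; [lra|].
  apply Rmult_le_reg_r with p; [assumption|].
  rewrite Rmult_assoc, Rinv_l; lra.
Qed.

(** * Covering requests and packing loads *)

Definition unit_cover (m d : nat) (c : cover) : Prop :=
  (forall i, (i < m)%nat -> is01 (fst c i)) /\ snd c = 1 /\
  (1 <= supp_size m (fst c) <= d)%nat.

Lemma unit_cover_nonneg m d c : unit_cover m d c -> forall i, (i < m)%nat -> 0 <= fst c i.
Proof. intros [H01 _] i Hi; destruct (H01 i Hi) as [-> | ->]; lra. Qed.

Lemma unit_cover_admissible m d c : unit_cover m d c -> admissible_cover m c.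
Proof.
  intros Hc; split; [exact (unit_cover_nonneg m d c Hc)|].
  destruct Hc as [H01 [_ Hsupp]].
  left; destruct (supp_size_witness m (fst c) ltac:(lia)) as [i [Hi Hci]].
  exists i; split; [assumption|]; destruct (H01 i Hi); [contradiction | lra].
Qed.

Lemma covers_mono m c x y :
  (forall i, (i < m)%nat -> 0 <= fst c i) -> (forall i, (i < m)%nat -> x i <= y i) ->
  covers m c x -> covers m c y.
Proof.
  unfold covers; intros Hc Hxy Hx.
  enough (rsum m (fun i => fst c i * x i) <= rsum m (fun i => fst c i * y i)) by lra.
  apply rsum_le; intros; apply Rmult_le_compat_l; auto.
Qed.

Lemma covers_unitv m c s : (s < m)%nat -> fst c s = 1 -> snd c = 1 -> covers m c (unitv s).
Proof. unfold covers; intros; rewrite rsum_unitv by assumption; lra. Qed.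

Lemma covers_merge m d csl csr csj xl xr s :
  (forall c, In c (csl ++ csr ++ csj) -> unit_cover m d c) ->
  (forall i, 0 <= xl i) -> (forall i, 0 <= xr i) ->
  (forall c, In c csl -> covers m c xl) -> (forall c, In c csr -> covers m c xr) ->
  (s < m)%nat -> (forall c, In c csj -> fst c s = 1) ->
  forall c, In c (csl ++ csr ++ csj) -> covers m c (fun i => xl i + xr i + unitv s i).
Proof.
  intros U Hl Hr Cl Cr Hs Cj c Hc; pose proof (unitv_nonneg s) as Hu.
  assert (Hcov : covers m c xl \/ covers m c xr \/ covers m c (unitv s)).
  { pose proof (proj1 (proj2 (U c Hc))) as Hc1.
    rewrite !in_app_iff in Hc; destruct Hc as [Hc|[Hc|Hc]]; auto.
    right; right; apply covers_unitv; auto. }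
  destruct Hcov as [H|[H|H]];
    (eapply covers_mono; [exact (unit_cover_nonneg m d c (U c Hc)) | | exact H]);
    intros i _; pose proof (Hl i); pose proof (Hr i); pose proof (Hu i); lra.
Qed.

Definition pair_cover (la lb w : nat) : cover := (fun i => indicator la w i + indicator lb w i, 1).

Lemma pair_cover_at la lb w i :
  (la + w <= lb)%nat -> (la <= i < la + w \/ lb <= i < lb + w)%nat ->
  fst (pair_cover la lb w) i = 1.
Proof.
  intros Hab [Hi|Hi]; simpl.
  - rewrite (indicator_in la), (indicator_out lb) by lia; lra.
  - rewrite (indicator_out la), (indicator_in lb) by lia; lra.
Qed.

Lemma pair_cover_unit m d la lb w :
  (1 <= w)%nat -> (la + w <= lb)%nat -> (lb + w <= m)%nat -> (2 * w <= d)%nat ->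
  unit_cover m d (pair_cover la lb w).
Proof.
  intros Hw Hab Hbm Hd; split; [|split; [reflexivity|split]].
  - intros i _; unfold is01; simpl; destruct (Compare_dec.le_lt_dec lb i).
    + rewrite (indicator_out la) by lia; destruct (indicator_01 lb w i) as [-> | ->]; lra.
    + rewrite (indicator_out lb) by lia; destruct (indicator_01 la w i) as [-> | ->]; lra.
  - apply (supp_size_pos m _ la); [lia|]; rewrite pair_cover_at by lia; lra.
  - pose proof (supp_size_add_le m (indicator la w) (indicator lb w)).
    rewrite !supp_size_indicator in H; simpl; lia.
Qed.

Lemma pair_cover_sum m la lb w x :
  (la + w <= lb)%nat -> (lb + w <= m)%nat -> covers m (pair_cover la lb w) x ->
  isum la w x + isum lb w x >= 1.
Proof.
  unfold covers; simpl; intros Hab Hbm.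
  rewrite <- (rsum_indicator m la w x), <- (rsum_indicator m lb w x), <- rsum_add by lia.
  erewrite rsum_ext; [intros H; exact H|]; intros; simpl; ring.
Qed.

Definition load (m : nat) (P : nat -> nat -> R) (x : nat -> R) (k : nat) : R :=
  rsum m (fun i => P k i * x i).

Lemma lp_obj_unit_bounds p m r P x : lp_obj p m r P (fun _ => 1) x = lp_norm p r (load m P x).
Proof.
  unfold lp_obj, lp_norm; f_equal; apply rsum_ext; intros k _.
  unfold viol, load; rewrite Rdiv_1_r; reflexivity.
Qed.

Lemma load_add m P x y k : load m P (fun i => x i + y i) k = load m P x k + load m P y k.
Proof. unfold load; rewrite <- rsum_add; apply rsum_ext; intros; ring. Qed.

Definition block_rows (B k i : nat) : R := indicator (k * B) B i.

Lemma block_rows_at B k l s : (l * B <= s < l * B + B)%nat -> block_rows B k s = unitv l k.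
Proof.
  intros Hs; unfold block_rows, unitv; destruct (Nat.eqb_spec k l) as [-> | Hkl].
  - apply indicator_in; lia.
  - apply indicator_out; destruct (Nat.lt_ge_cases k l); nia.
Qed.

(** * The adversary *)

Lemma choose_heavier (f : nat -> R) wl wr sa sb :
  exists w l s : nat, (w = wl /\ l = wr /\ s = sb \/ w = wr /\ l = wl /\ s = sa) /\ f l <= f w.
Proof.
  destruct (Rle_dec (f wr) (f wl)).
  - exists wl, wr, sb; auto.
  - exists wr, wl, sa; split; [auto | lra].
Qed.

Lemma load_merge m B k0 a wl wr w l s xl xr :
  (l * B <= s < l * B + B)%nat -> (s < m)%nat -> (w = wl /\ l = wr \/ w = wr /\ l = wl) ->
  (forall k, load m (block_rows B) xl k = indicator k0 a k - unitv wl k) ->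
  (forall k, load m (block_rows B) xr k = indicator (k0 + a) a k - unitv wr k) ->
  forall k, load m (block_rows B) (fun i => xl i + xr i + unitv s i) k =
            indicator k0 (a + a) k - unitv w k.
Proof.
  intros Hs Hsm Hwl Hl Hr k; rewrite !load_add, Hl, Hr, <- indicator_split.
  unfold load at 1; rewrite rsum_unitv, (block_rows_at _ _ l) by assumption.
  destruct Hwl as [[-> ->] | [-> ->]]; lra.
Qed.

Section HalvingGame.

Variable A : online_alg.
Hypothesis A_valid : valid_alg A.
Variables (m r d : nat) (P : nat -> nat -> R) (pv : nat -> R).

Local Notation play h := (A m r P pv h).

Lemma play_nonneg h i : (i < m)%nat -> 0 <= play h i.
Proof. intros Hi; exact (proj1 (A_valid m r P pv h) i Hi). Qed.

Lemma play_covers h c : unit_cover m d c -> covers m c (play (h ++ [c])).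
Proof.
  intros Hc; exact (proj2 (proj2 (A_valid m r P pv h) c (unit_cover_admissible _ _ _ Hc))).
Qed.

Lemma play_mono h cs :
  (forall c, In c cs -> unit_cover m d c) -> forall i, (i < m)%nat -> play h i <= play (h ++ cs) i.
Proof.
  revert h; induction cs as [|c cs IH]; intros h Hcs i Hi; [rewrite app_nil_r; lra|].
  replace (h ++ c :: cs) with ((h ++ [c]) ++ cs) by (rewrite <- app_assoc; reflexivity).
  apply Rle_trans with (play (h ++ [c]) i).
  - apply (proj2 (A_valid m r P pv h) c); [apply (unit_cover_admissible m d), Hcs|]; simpl; auto.
  - apply IH; [intros; apply Hcs; simpl|]; auto.
Qed.

Lemma isum_play_mono h cs lo w :
  (forall c, In c cs -> unit_cover m d c) -> (lo + w <= m)%nat ->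
  isum lo w (play h) <= isum lo w (play (h ++ cs)).
Proof. intros Hcs Hw; apply isum_le; intros i Hi; apply play_mono; [assumption | lia]. Qed.

Lemma halving_game n : (2 * 2 ^ n <= d)%nat ->
  forall h la lb, (la + 2 ^ n <= lb)%nat -> (lb + 2 ^ n <= m)%nat ->
  exists cs sa sb, (la <= sa < la + 2 ^ n)%nat /\ (lb <= sb < lb + 2 ^ n)%nat /\
    (forall c, In c cs -> unit_cover m d c /\ fst c sa = 1 /\ fst c sb = 1) /\
    INR n / 2 <= isum la (2 ^ n) (play (h ++ cs)) + isum lb (2 ^ n) (play (h ++ cs)).
Proof.
  induction n as [|n IH]; intros Hd h la lb Hab Hbm.
  - exists [], la, lb; simpl in *; split; [lia|]; split; [lia|]; split; [intros _ []|].
    rewrite Rdiv_0_l.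
    pose proof (isum_nonneg la 1 (play (h ++ [])) (fun i Hi => play_nonneg _ i ltac:(lia))).
    pose proof (isum_nonneg lb 1 (play (h ++ [])) (fun i Hi => play_nonneg _ i ltac:(lia))).
    lra.
  - set (w := (2 ^ n)%nat) in *.
    assert (Hw : (2 ^ S n = w + w)%nat) by (simpl; lia).
    assert (Hw1 : (1 <= w)%nat) by (pose proof (Nat.pow_nonzero 2 n); lia).
    rewrite Hw in *.
    set (c0 := pair_cover la lb (w + w)); set (h1 := h ++ [c0]).
    assert (Hc0 : unit_cover m d c0) by (apply pair_cover_unit; lia).
    pose proof (pair_cover_sum m la lb (w + w) (play h1) ltac:(lia) ltac:(lia)
                  (play_covers h c0 Hc0)) as Hcov.
    destruct (lighter_half la w (play h1)) as [la' [Hla' Ha]].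
    destruct (lighter_half lb w (play h1)) as [lb' [Hlb' Hb]].
    destruct (IH ltac:(lia) h1 la' lb' ltac:(lia) ltac:(lia))
      as (cs & sa & sb & Hsa & Hsb & Hcs & Hmass).
    exists (c0 :: cs), sa, sb; split; [lia|]; split; [lia|]; split.
    + intros c [<- | Hc]; [|now apply Hcs].
      split; [assumption|]; split; apply pair_cover_at; lia.
    + replace (h ++ c0 :: cs) with (h1 ++ cs) by (unfold h1; rewrite <- app_assoc; reflexivity).
      assert (Hmono : forall i, (i < m)%nat -> play h1 i <= play (h1 ++ cs) i)
        by (apply play_mono; intros; apply Hcs; assumption).
      specialize (Ha (play (h1 ++ cs)) (fun i Hi => Hmono i ltac:(lia))).
      specialize (Hb (play (h1 ++ cs)) (fun i Hi => Hmono i ltac:(lia))).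
      rewrite S_INR; lra.
Qed.

End HalvingGame.

Section Tournament.

Variable A : online_alg.
Hypothesis A_valid : valid_alg A.
Variables (r d : nat) (pv : nat -> R) (M q L : nat).
Hypothesis level_fits : (2 * 2 ^ L <= d)%nat.

Local Notation D := (2 ^ L)%nat.
Local Notation B := (q * 2 ^ L)%nat.
Local Notation m := (M * (q * 2 ^ L))%nat.
Local Notation play h := (A m r (block_rows B) pv h).

Lemma block_prefix_in_range x j : (x < M)%nat -> (j <= q)%nat -> (x * B + j * D <= m)%nat.
Proof.
  intros Hx Hj.
  pose proof (Nat.mul_le_mono_r (S x) M B Hx); pose proof (Nat.mul_le_mono_r j q D Hj); lia.
Qed.

Lemma tournament n : (n <= q)%nat -> forall h k0, (k0 + 2 ^ n <= M)%nat ->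
  exists cs w xs, (k0 <= w < k0 + 2 ^ n)%nat /\
    (forall c, In c cs -> unit_cover m d c) /\
    (forall i, 0 <= xs i) /\ (forall c, In c cs -> covers m c xs) /\
    (forall k, load m (block_rows B) xs k = indicator k0 (2 ^ n) k - unitv w k) /\
    INR n * INR L / 4 <= isum (w * B) (n * D) (play (h ++ cs)).
Proof.
  induction n as [|n IH]; intros Hn h k0 Hk.
  - exists [], k0, (fun _ => 0); simpl in Hk |- *.
    split; [lia|]; split; [intros _ []|]; split; [intros; lra|]; split; [intros _ []|].
    split; [|unfold isum; simpl; lra].
    intros k; unfold load; rewrite rsum_eq0 by (intros; ring); rewrite indicator_one; lra.
  - set (a := (2 ^ n)%nat) in *.
    assert (Ha : (2 ^ S n = a + a)%nat) by (simpl; lia); rewrite Ha in *.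
    destruct (IH ltac:(lia) h k0 ltac:(lia)) as (csl & wl & xl & Hwl & Ul & Nl & Cl & Ll & Vl).
    destruct (IH ltac:(lia) (h ++ csl) (k0 + a)%nat ltac:(lia))
      as (csr & wr & xr & Hwr & Ur & Nr & Cr & Lr & Vr).
    set (h2 := (h ++ csl) ++ csr) in Vr.
    set (la := (wl * B + n * D)%nat); set (lb := (wr * B + n * D)%nat).
    assert (Hlevel : (n * D + D <= B)%nat) by nia.
    assert (Hblock : (wl * B + B <= wr * B)%nat) by nia.
    pose proof (block_prefix_in_range wl (S n)); pose proof (block_prefix_in_range wr (S n)).
    destruct (halving_game A A_valid m r d (block_rows B) pv L level_fits h2 la lb
                ltac:(unfold la, lb; lia) ltac:(unfold lb; lia))
      as (csj & sa & sb & Hsa & Hsb & Uj & Vj).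
    assert (Uall : forall c, In c (csl ++ csr ++ csj) -> unit_cover m d c)
      by (intros c Hc; rewrite !in_app_iff in Hc; destruct Hc as [Hc|[Hc|Hc]]; auto; apply Uj, Hc).
    set (F := play (h2 ++ csj)) in Vj.
    assert (Hmass : INR n * INR L / 2 + INR L / 2 <=
                    isum (wl * B) (S n * D) F + isum (wr * B) (S n * D) F).
    { replace (S n * D)%nat with (n * D + D)%nat by lia; rewrite !isum_split.
      pose proof (isum_play_mono A A_valid m r d (block_rows B) pv (h ++ csl) (csr ++ csj)
                    (wl * B) (n * D)
                    (fun c Hc => Uall c ltac:(apply in_app_iff; now right)) ltac:(lia)).
      pose proof (isum_play_mono A A_valid m r d (block_rows B) pv h2 csj (wr * B) (n * D)
                    (fun c Hc => proj1 (Uj c Hc)) ltac:(lia)).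
      unfold F, h2 in *; rewrite <- !app_assoc in *; unfold la, lb in Vj; lra. }
    destruct (choose_heavier (fun x => isum (x * B) (S n * D) F) wl wr sa sb)
      as (w & l & s & Hwls & Hwin); cbv beta in Hwin.
    assert (Hs : (l * B <= s < l * B + B)%nat /\ (s < m)%nat /\ forall c, In c csj -> fst c s = 1).
    { unfold la, lb in *; destruct Hwls as [(-> & -> & ->) | (-> & -> & ->)];
        (split; [lia | split; [lia | intros c Hc; apply Uj; assumption]]). }
    destruct Hs as (Hs & Hsm & Hsc).
    exists (csl ++ csr ++ csj), w, (fun i => xl i + xr i + unitv s i).
    replace (h ++ csl ++ csr ++ csj) with (h2 ++ csj)
      by (unfold h2; rewrite !app_assoc; reflexivity).
    split; [destruct Hwls; lia|]; split; [exact Uall|].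
    split; [intros i; pose proof (Nl i); pose proof (Nr i); pose proof (unitv_nonneg s i); lra|].
    split; [apply (covers_merge m d); assumption|].
    split.
    { apply (load_merge m B k0 a wl wr w l s); auto.
      destruct Hwls as [(? & ? & _) | (? & ? & _)]; auto. }
    fold F; rewrite S_INR; destruct Hwls as [(-> & -> & _) | (-> & -> & _)]; lra.
Qed.

End Tournament.

Lemma indicator_sub_unitv_bounds lo n w k :
  (lo <= w < lo + n)%nat -> 0 <= indicator lo n k - unitv w k <= 1.
Proof.
  intros Hw; unfold unitv; destruct (Nat.eqb_spec k w) as [-> |].
  - rewrite indicator_in by lia; lra.
  - destruct (indicator_01 lo n k) as [-> | ->]; lra.
Qed.

Lemma lower_bound_instance (A : online_alg) (r d q L : nat) (p : R) :
  valid_alg A -> 1 <= p -> (1 <= q)%nat -> INR q <= p -> (2 ^ q <= r)%nat ->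
  (2 * 2 ^ L <= d)%nat -> (q * 2 ^ L <= d)%nat ->
  exists (m : nat) (P : nat -> nat -> R) (pv : nat -> R) (cs : list cover),
    (forall k i, (k < r)%nat -> (i < m)%nat -> is01 (P k i)) /\
    (forall k, (k < r)%nat -> 0 < pv k) /\
    (forall k, (k < r)%nat -> (supp_size m (P k) <= d)%nat) /\
    (forall cv, In cv cs ->
       (forall i, (i < m)%nat -> is01 (fst cv i)) /\ 0 < snd cv /\
       (1 <= supp_size m (fst cv) <= d)%nat) /\
    exists xstar : nat -> R,
      (forall i, (i < m)%nat -> 0 <= xstar i) /\
      (forall cv, In cv cs -> covers m cv xstar) /\
      0 < lp_obj p m r P pv xstar <= 2 /\
      INR q * INR L / 4 <= lp_obj p m r P pv (A m r P pv cs).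
Proof.
  intros HA Hp Hq Hqp Hqr Hd Hqd.
  destruct (tournament A HA r d (fun _ => 1) (2 ^ q) q L Hd q (le_n q) [] 0 ltac:(lia))
    as (cs & w & xs & Hw & Hcs & Hxs & Hcov & Hload & Hon).
  set (B := (q * 2 ^ L)%nat) in *; set (M := (2 ^ q)%nat) in *; set (m := (M * B)%nat) in *.
  assert (HM : (2 <= M)%nat) by (apply (Nat.pow_le_mono_r 2 1 q); lia).
  simpl app in Hon.
  exists m, (block_rows B), (fun _ => 1), cs.
  split; [intros; apply indicator_01|].
  split; [intros; lra|].
  split; [intros k _; change (block_rows B k) with (indicator (k * B) B);
          rewrite supp_size_indicator; lia|].
  split; [intros cv Hcv; destruct (Hcs cv Hcv) as (H01 & H1 & Hsupp); rewrite H1; auto with real|].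
  exists xs; split; [auto|]; split; [assumption|].
  rewrite !lp_obj_unit_bounds.
  assert (Hopt : forall k, 0 <= load m (block_rows B) xs k <= 1)
    by (intros k; rewrite Hload; apply indicator_sub_unitv_bounds; lia).
  split; [split|].
  - set (l := if (w =? 0)%nat then 1%nat else 0%nat).
    assert (Hl : (l < M)%nat /\ l <> w) by (unfold l; destruct (Nat.eqb_spec w 0); lia).
    apply Rlt_le_trans with (load m (block_rows B) xs l).
    + rewrite Hload, indicator_in by lia; unfold unitv.
      destruct (Nat.eqb_spec l w); [lia|lra].
    + apply lp_norm_ge_coord; [lra | apply Hopt | lia].
  - apply Rle_trans with (rpow (INR M) (/ p)).
    + apply lp_norm_le_card; [lra | assumption |].
      intros k Hk; rewrite Hload, indicator_out by lia.
      unfold unitv; destruct (Nat.eqb_spec k w); lia || lra.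
    + unfold M; rewrite pow_INR; apply rpow_pow2_inv_le; lra.
  - apply Rle_trans with (load m (block_rows B) (A m r (block_rows B) (fun _ => 1) cs) w).
    + unfold load; rewrite (rsum_indicator m (w * B) B) by (unfold m; nia).
      exact Hon.
    + apply lp_norm_ge_coord; [lra | | lia].
      intros k; apply rsum_nonneg; intros i Hi; apply Rmult_le_pos.
      * destruct (indicator_01 (k * B) B i) as [E|E]; unfold block_rows; lra.
      * apply (play_nonneg A HA); assumption.
Qed.

(** * Choice of the parameters *)

Lemma ln_le x y : 0 < x -> x <= y -> ln x <= ln y.
Proof.
  intros Hx Hxy; destruct (Rle_lt_or_eq_dec x y Hxy) as [H| ->];
    [left; now apply ln_increasing | lra].
Qed.

Lemma exp_le x y : x <= y -> exp x <= exp y.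
Proof.
  intros H; destruct (Rle_lt_or_eq_dec x y H) as [H'| ->];
    [left; now apply exp_increasing | lra].
Qed.

Lemma nat_floor x : 0 <= x -> exists n : nat, INR n <= x < INR n + 1.
Proof.
  intros Hx.
  assert (HN : exists N : nat, x < INR N).
  { destruct (archimed x) as [H _]; exists (Z.to_nat (up x)).
    rewrite INR_IZR_INZ, Z2Nat.id; [lra|]; apply le_IZR; lra. }
  destruct HN as [N HN]; induction N as [|N IH]; [simpl in HN; lra|].
  destruct (Rlt_dec x (INR N)) as [H|H]; [now apply IH|].
  exists N; rewrite S_INR in HN; lra.
Qed.

Lemma ln_2_lt_1 : ln 2 < 1.
Proof.
  rewrite <- (ln_exp 1); apply ln_increasing; [lra|].
  pose proof (exp_ineq1 1 ltac:(lra)); lra.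
Qed.

Lemma Rpower2_le_exp (x : R) : 0 <= x -> Rpower 2 x <= exp x.
Proof.
  intros Hx; unfold Rpower; apply exp_le.
  pose proof ln_2_lt_1; rewrite <- (Rmult_1_r x) at 2; apply Rmult_le_compat_l; lra.
Qed.

Lemma choose_exponent (r : nat) (p : R) :
  1 <= p -> p <= ln (INR r) ->
  exists q : nat, (1 <= q)%nat /\ p / 2 <= INR q <= p /\ (2 ^ q <= r)%nat.
Proof.
  intros Hp Hpr.
  assert (Hr : 0 < INR r).
  { destruct r; [|apply lt_0_INR; lia]. simpl in Hpr; unfold ln in Hpr.
    destruct (Rlt_dec 0 0); lra. }
  destruct (nat_floor p) as [q [Hq1 Hq2]]; [lra|].
  assert (Hq : (1 <= q)%nat) by (destruct q; [simpl in Hq2; lra | lia]).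
  pose proof (le_INR 1 q Hq).
  exists q; split; [assumption|]; split; [simpl in *; lra|].
  apply INR_le; rewrite pow_INR, <- Rpower_pow by (simpl; lra); simpl INR.
  rewrite <- (exp_ln (INR r)) by assumption.
  apply Rle_trans with (exp (INR q)); [apply Rpower2_le_exp, pos_INR | apply exp_le; lra].
Qed.

Lemma log2_floor (Y : R) : 1 <= Y -> exists L : nat, 2 ^ L <= Y /\ ln Y < INR L + 1.
Proof.
  intros HY; pose proof ln_2_lt_1; pose proof ln_lt_2.
  assert (HlnY : 0 <= ln Y) by (rewrite <- ln_1; apply ln_le; lra).
  destruct (nat_floor (ln Y / ln 2)) as [L [HL1 HL2]].
  { apply Rmult_le_pos; [lra | left; apply Rinv_0_lt_compat; lra]. }
  exists L; split.
  - rewrite <- Rpower_pow by lra; rewrite <- (exp_ln Y) by lra; apply exp_le.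
    apply Rmult_le_reg_r with (/ ln 2); [apply Rinv_0_lt_compat; lra|].
    rewrite Rmult_assoc, Rinv_r by lra; lra.
  - apply Rmult_lt_compat_r with (r := ln 2) in HL2; [|lra].
    unfold Rdiv in HL2; rewrite Rmult_assoc, Rinv_l, Rmult_1_r in HL2 by lra.
    pose proof (pos_INR L); nra.
Qed.

(* With Y = d / (q + 2) >= X / 3, where X = d / ln r, we get
   L > ln Y - 1 >= ln X - 3, and this is at least ln X / 2 once ln X >= 6. *)
Lemma lower_bound_parameters (r d : nat) (p : R) :
  1 <= p -> p <= ln (INR r) -> exp 6 * ln (INR r) <= INR d ->
  exists q L : nat, (1 <= q)%nat /\ p / 2 <= INR q <= p /\ (2 ^ q <= r)%nat /\
    (2 * 2 ^ L <= d)%nat /\ (q * 2 ^ L <= d)%nat /\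
    0 <= ln (INR d / ln (INR r)) <= 2 * INR L.
Proof.
  intros Hp Hpr Hd.
  destruct (choose_exponent r p Hp Hpr) as (q & Hq & Hqp & Hqr).
  set (lr := ln (INR r)) in *; set (X := INR d / lr).
  pose proof (exp_ineq1 6 ltac:(lra)) as He6.
  assert (HX : exp 6 <= X).
  { unfold X; apply Rmult_le_reg_r with lr; [lra|].
    unfold Rdiv; rewrite Rmult_assoc, Rinv_l by lra; lra. }
  assert (HlnX : 6 <= ln X) by (rewrite <- (ln_exp 6); apply ln_le; [apply exp_pos | assumption]).
  assert (Hq2 : 0 < INR (q + 2)) by (rewrite plus_INR; simpl; pose proof (pos_INR q); lra).
  set (Y := INR d / INR (q + 2)).
  assert (HYX : X / 3 <= Y).
  { unfold X, Y, Rdiv; rewrite Rmult_assoc, <- Rinv_mult.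
    apply Rmult_le_compat_l; [apply pos_INR|].
    apply Rinv_le_contravar; [assumption|]; rewrite plus_INR; simpl; lra. }
  destruct (log2_floor Y ltac:(lra)) as (L & HLY & HlnY).
  assert (HLd : (2 ^ L * (q + 2) <= d)%nat).
  { apply INR_le; rewrite mult_INR, pow_INR; simpl INR.
    apply Rmult_le_reg_r with (/ INR (q + 2)); [apply Rinv_0_lt_compat; lra|].
    rewrite Rmult_assoc, Rinv_r, Rmult_1_r by lra; exact HLY. }
  assert (Hln3 : ln 3 < 2).
  { rewrite <- (ln_exp 2); apply ln_increasing; [lra|].
    pose proof (exp_ineq1 2 ltac:(lra)); lra. }
  assert (HlnYX : ln X - ln 3 <= ln Y).
  { replace (ln X - ln 3) with (ln (X / 3)); [apply ln_le; lra|].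
    unfold Rdiv; rewrite ln_mult, ln_Rinv by lra; ring. }
  exists q, L; repeat split; try lia; lra.
Qed.

Theorem theorem3 :
  exists c : R, 0 < c /\ exists K : R,
  forall (r d : nat) (p : R),
    1 <= p -> p <= ln (INR r) ->
    K * ln (INR r) <= INR d ->
    forall A : online_alg, valid_alg A ->
    exists (m : nat) (P : nat -> nat -> R) (pv : nat -> R) (cs : list cover),
      (forall k i, (k < r)%nat -> (i < m)%nat -> is01 (P k i)) /\
      (forall k, (k < r)%nat -> 0 < pv k) /\
      (forall k, (k < r)%nat -> (supp_size m (P k) <= d)%nat) /\
      (forall cv, In cv cs ->
         (forall i, (i < m)%nat -> is01 (fst cv i)) /\ 0 < snd cv /\
         (1 <= supp_size m (fst cv) <= d)%nat) /\
      exists xstar : nat -> R,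
        (forall i, (i < m)%nat -> 0 <= xstar i) /\
        (forall cv, In cv cs -> covers m cv xstar) /\
        0 < lp_obj p m r P pv xstar /\
        lp_obj p m r P pv (A m r P pv cs)
          >= c * p * ln (INR d / ln (INR r)) * lp_obj p m r P pv xstar.
Proof.
  exists (1 / 32); split; [lra|]; exists (exp 6).
  intros r d p Hp Hpr Hd A HA.
  destruct (lower_bound_parameters r d p Hp Hpr Hd)
    as (q & L & Hq & [Hqp Hpq] & Hqr & HLd & HqLd & [HX HXL]).
  destruct (lower_bound_instance A r d q L p HA Hp Hq Hpq Hqr HLd HqLd)
    as (m & P & pv & cs & HP & Hpv & HPd & Hcs & xs & Hxs & Hcov & [Hopt Hopt2] & Halg).
  exists m, P, pv, cs; do 4 (split; [assumption|]).
  exists xs; do 3 (split; [assumption|]).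
  set (X := ln (INR d / ln (INR r))) in *.
  assert (Hgap : p * X <= 4 * INR q * INR L) by nra.
  assert (1 / 32 * p * X * lp_obj p m r P pv xs <= 1 / 32 * p * X * 2)
    by (apply Rmult_le_compat_l; nra).
  lra.
Qed.
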